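(* Let $0<\gamma\le 1/2$, let $(x,z)$ be an optimal extreme point solution of LP-CVRP-MD with optimum value $\mathrm{opt}_{LP}$, run the sampling procedure described in the context, let $U$ be the set of clients lying on no sampled branching, and let $F$ be a minimum-cost spanning forest of the complete graph on $C\cup R$ (edge costs $c$) in which each connected component contains exactly one vertex of $R\cup(C\setminus U)$. Then $\mathbb E[c(F)]\le e^{-\gamma}\,\mathrm{opt}_{LP}$.
   Context: Problem: nonempty disjoint finite sets $C$ (clients) and $R$ (depots), $V = C\cup R$, a metric $c$ on $V$, integer capacity $k \ge 3$; $c(v,R):=\min_{r\in R}c(v,r)>0$ for every client $v$. Work in the complete bidirected graph on $V$ (directed edges $(a,b)$ of cost $c(a,b)$); for a vector $y$ on directed edges and $S\subseteq V$, $y(\delta^{in}(S))$, $y(\delta^{out}(S))$ are sums over edges entering/leaving $S$. LP-CVRP-MD has variables $x^r_{v,e}\ge 0$ ($r\in R$, $v\in C$, $e$ a directed edge) and $z^r_{v,u}\ge0$ ($r\in R$, $v\in C$, $u\in V$), objective: minimize $\sum_{r,v,e} c(e)x^r_{v,e}$, constraints: (1) $x^r_v(\delta^{out}(u))$ is $2z^r_{v,v}$ if $u=r$, $0$ if $u=v$, $z^r_{v,u}$ otherwise; (2) $x^r_v(\delta^{in}(u))$ is $0$ if $u=r$, $2z^r_{v,v}$ if $u=v$, $z^r_{v,u}$ otherwise (for all $r\in R,v\in C,u\in V$); (3) $x^r_v(\delta^{in}(S))\ge z^r_{v,u}$ whenever $u\in S\subseteq V\setminus\{r\}$; (4) $\sum_{r\in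 R}\sum_{v\in C} z^r_{v,u}=1$ for all $u\in C$; (5) $z^r_{v,u}\le z^r_{v,v}$ for $u,v\in C$; (6) $z^r_{v,u}=0$ if $u,v\in C$ and $c(u,r)>c(v,r)$; (7) $\sum_{u\in C}z^r_{v,u}\le k z^r_{v,v}$. An $r$-branching is a tree rooted at $r$ oriented away from $r$. Sampling procedure: for each $r\in R$, $v\in C$, take $r$-branchings $B_1,B_2,\dots$ (finitely many) with weights $\mu_i\ge0$, $\sum_i\mu_i = 2\gamma z^r_{v,v}$, such that every directed edge $e$ lies in branchings of total weight at most $\gamma x^r_{v,e}$, $v$ lies on every $B_i$, and every client $u\neq v$ lies in branchings of total weight at least $\gamma z^r_{v,u}$ (such a decomposition exists by a theorem of Bang-Jensen, Frank and Jackson). Independently include each $B_i$ with probability $\mu_i$. $c(F)$ denotes the total edge cost of $F$. *)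

From mathcomp Require Import all_boot all_order all_algebra.
From mathcomp Require Import reals sequences exp.
Set Implicit Arguments. Unset Strict Implicit. Unset Printing Implicit Defensive.
Import Order.TTheory GRing.Theory Num.Theory.
Local Open Scope ring_scope.

(* Vertex set V (a finite type); Dep = R (depots); clients C = ~: Dep. *)

Definition is_metric (R : realType) (V : finType) (c : V -> V -> R) : Prop :=
  [/\ (forall a, c a a = 0),
      (forall a b, a != b -> 0 < c a b),
      (forall a b, c a b = c b a) &
      (forall a b d, c a d <= c a b + c b d)].

(* LP variables: x r v a b = x^r_{v,(a,b)}, z r v u = z^r_{v,u}.
   Coordinates not corresponding to an LP variable (r not a depot,
   v not a client, or a = b) are fixed to 0. *)
Definition lp_feasible (R : realType) (V : finType) (Dep : {set V})
    (c : V -> V -> R) (k : nat)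
    (x : V -> V -> V -> V -> R) (z : V -> V -> V -> R) : Prop :=
  (forall r v a b, ~~ [&& r \in Dep, v \in ~: Dep & a != b] -> x r v a b = 0) /\
      (forall r v u, ~~ ((r \in Dep) && (v \in ~: Dep)) -> z r v u = 0) /\
      (forall r v a b, 0 <= x r v a b) /\
      (forall r v u, 0 <= z r v u) /\
      (forall r v u, r \in Dep -> v \in ~: Dep ->
         \sum_(b : V) x r v u b =
           (if u == r then 2 * z r v v else if u == v then 0 else z r v u)) /\
      (forall r v u, r \in Dep -> v \in ~: Dep ->
         \sum_(a : V) x r v a u =
           (if u == r then 0 else if u == v then 2 * z r v v else z r v u)) /\
      (* (3) cut constraints *)
      (forall r v (S : {set V}) u, r \in Dep -> v \in ~: Dep -> u \in S -> r \notin S ->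
         z r v u <= \sum_(e : V * V | (e.1 \notin S) && (e.2 \in S)) x r v e.1 e.2) /\
      (* (4) *)
      (forall u, u \in ~: Dep -> \sum_(r in Dep) \sum_(v in ~: Dep) z r v u = 1) /\
          (forall r v u, r \in Dep -> v \in ~: Dep -> u \in ~: Dep -> z r v u <= z r v v) /\
          (forall r v u, r \in Dep -> v \in ~: Dep -> u \in ~: Dep ->
             c v r < c u r -> z r v u = 0) /\
          (forall r v, r \in Dep -> v \in ~: Dep ->
             \sum_(u in ~: Dep) z r v u <= k%:R * z r v v).

Definition lp_cost (R : realType) (V : finType) (Dep : {set V})
    (c : V -> V -> R) (x : V -> V -> V -> V -> R) : R :=
  \sum_(r in Dep) \sum_(v in ~: Dep) \sum_(e : V * V | e.1 != e.2)
     c e.1 e.2 * x r v e.1 e.2.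

Definition lp_optimal (R : realType) (V : finType) (Dep : {set V})
    (c : V -> V -> R) (k : nat)
    (x : V -> V -> V -> V -> R) (z : V -> V -> V -> R) : Prop :=
  lp_feasible Dep c k x z /\
  forall x' z', lp_feasible Dep c k x' z' -> lp_cost Dep c x <= lp_cost Dep c x'.

Definition lp_extreme (R : realType) (V : finType) (Dep : {set V})
    (c : V -> V -> R) (k : nat)
    (x : V -> V -> V -> V -> R) (z : V -> V -> V -> R) : Prop :=
  lp_feasible Dep c k x z /\
  forall x1 z1 x2 z2 (lam : R),
    lp_feasible Dep c k x1 z1 -> lp_feasible Dep c k x2 z2 -> 0 < lam < 1 ->
    (forall r v a b, x r v a b = lam * x1 r v a b + (1 - lam) * x2 r v a b) ->
    (forall r v u, z r v u = lam * z1 r v u + (1 - lam) * z2 r v u) ->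
    (forall r v a b, x1 r v a b = x2 r v a b) /\ (forall r v u, z1 r v u = z2 r v u).

Definition dverts (V : finType) (r : V) (B : {set V * V}) : {set V} :=
  r |: ([set e.1 | e in B] :|: [set e.2 | e in B]).

Definition drel (V : finType) (B : {set V * V}) : rel V := fun a b => (a, b) \in B.

Definition is_branching (V : finType) (r : V) (B : {set V * V}) : Prop :=
  [/\ (forall e, e \in B -> e.1 != e.2),
      (forall a, (a, r) \notin B),
      (forall b, b \in dverts r B -> b != r -> #|[set a | (a, b) \in B]| = 1%N) &
      (forall b, b \in dverts r B -> connect (drel B) r b)].

(* The branching decomposition: index set I; branching i is B i, rooted at
   root i, belonging to the pair (root i, cli i), with weight mu i. *)
Definition decomposition_ok (R : realType) (V : finType) (Dep : {set V})
    (gamma : R) (x : V -> V -> V -> V -> R) (z : V -> V -> V -> R)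
    (I : finType) (root cli : I -> V) (B : I -> {set V * V}) (mu : I -> R) : Prop :=
  [/\ (forall i, [/\ root i \in Dep, cli i \in ~: Dep, is_branching (root i) (B i),
                     0 <= mu i & cli i \in dverts (root i) (B i)]),
      (forall r v, r \in Dep -> v \in ~: Dep ->
         \sum_(i | (root i == r) && (cli i == v)) mu i = 2 * gamma * z r v v),
      (forall r v a b, r \in Dep -> v \in ~: Dep ->
         \sum_(i | [&& root i == r, cli i == v & (a, b) \in B i]) mu i
           <= gamma * x r v a b) &
      (forall r v u, r \in Dep -> v \in ~: Dep -> u \in ~: Dep -> u != v ->
         gamma * z r v u <=
           \sum_(i | [&& root i == r, cli i == v & u \in dverts (root i) (B i)]) mu i)].

(* Outcome of the sampling: the set S of included branchings. *)
Definition uncovered (V : finType) (Dep : {set V}) (I : finType)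
    (root : I -> V) (B : I -> {set V * V}) (S : {set I}) : {set V} :=
  [set u in ~: Dep | [forall i in S, u \notin dverts (root i) (B i)]].

Definition sample_prob (R : realType) (I : finType) (mu : I -> R) (S : {set I}) : R :=
  (\prod_(i in S) mu i) * \prod_(i in ~: S) (1 - mu i).

(* Undirected forests in the complete graph on V: an undirected edge {a,b}
   is represented by exactly one of the ordered pairs (a,b), (b,a). *)
Definition uadj (V : finType) (F : {set V * V}) : rel V :=
  fun a b => ((a, b) \in F) || ((b, a) \in F).

Definition is_forest (V : finType) (F : {set V * V}) : Prop :=
  (forall a b, (a, b) \in F -> a != b /\ (b, a) \notin F) /\
  (forall s : seq V, (2 < size s)%N -> uniq s -> ~~ cycle (uadj F) s).

Definition rooted_forest (V : finType) (T : {set V}) (F : {set V * V}) : Prop :=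
  is_forest F /\
  forall a, #|[set t in T | connect (uadj F) a t]| = 1%N.

Definition forest_cost (R : realType) (V : finType) (c : V -> V -> R)
    (F : {set V * V}) : R :=
  \sum_(e in F) c e.1 e.2.

From mathcomp Require Import all_boot all_order all_algebra.
From mathcomp Require Import reals sequences exp lra.
Set Implicit Arguments. Unset Strict Implicit. Unset Printing Implicit Defensive.
Import Order.TTheory GRing.Theory Num.Theory.
Local Open Scope ring_scope.

(* Run Prim's algorithm from the depots, contracted into a single root: every client a is
   attached to a parent p a, and the edges (a, p a) form a minimum spanning forest with one
   depot per tree.  For a sample S, attaching every uncovered client to its parent gives a
   forest that is feasible for F, so c(F) is at most the sum of c(a, p a) over the uncovered
   clients.  A client a is uncovered with probability prod (1 - mu_i) over the branchings
   through a, which is at most exp (- sum mu_i) <= exp (- gamma), because the branchings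
   through a carry weight at least gamma * sum_{r,v} z^r_{v,a} = gamma.  It remains that the
   Prim forest costs at most opt_LP.  Fix a threshold t.  Every Prim edge of cost > t yields a
   component, free of depots, of the graph of the edges of cost <= t; distinct such edges
   yield distinct components, and constraints (3) and (4) push an LP load of at least 1 into
   each of them, along edges of cost > t.  Integrating over t gives the bound. *)

Section PrimOrder.
Variables (R : realDomainType) (V : finType) (c : V -> V -> R).

(* [rk] numbers the vertices outside [A] in the order in which Prim's algorithm, started from
   the contracted set [A], attaches them, and [a] is attached through the edge [(a, p a)];
   the last clause is the cut property of that edge. *)
Definition prim_order (A : {set V}) (rk : V -> nat) (p : V -> V) : Prop :=
  [/\ {in A, forall a, rk a = 0%N},
      {in ~: A &, injective rk},
      {in ~: A, forall a, rk (p a) < rk a}%N &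
      {in ~: A, forall a b d,
         (rk a <= rk b)%N -> (rk d < rk a)%N -> c a (p a) <= c b d}].

Lemma prim_order_rank_gt0 A rk p a :
  prim_order A rk p -> a \in ~: A -> (0 < rk a)%N.
Proof. by case=> _ _ rk_p _ aA; apply: leq_ltn_trans (rk_p a aA). Qed.

Lemma prim_order_add (A : {set V}) a0 b0 rk p :
    a0 \notin A -> b0 \in A ->
    (forall a b, a \notin A -> b \in A -> c a0 b0 <= c a b) ->
    prim_order (a0 |: A) rk p ->
  prim_order A (fun a => if a \in A then 0%N else (rk a).+1)
               (fun a => if a == a0 then b0 else p a).
Proof.
move=> a0A b0A a0b0_min po; have [rk0 rk_inj rk_p rk_cut] := po.
have rk_a0 : rk a0 = 0%N by rewrite rk0 // setU11.
have notin_add a : a \notin A -> a != a0 -> a \in ~: (a0 |: A).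
  by move=> aA na0; rewrite !inE negb_or na0.
have rk_gt0 a : a \notin A -> a != a0 -> (0 < rk a)%N.
  by move=> aA na0; apply: (prim_order_rank_gt0 po); exact: notin_add.
split=> [a -> // | a a' | a | a].
- rewrite !inE => aA a'A; rewrite (negbTE aA) (negbTE a'A) => -[rk_aa'].
  have [ea0 | na0] := eqVneq a a0; have [ea'0 | na'0] := eqVneq a' a0.
  + by rewrite ea0 ea'0.
  + by move: (rk_gt0 a' a'A na'0); rewrite -rk_aa' ea0 rk_a0.
  + by move: (rk_gt0 a aA na0); rewrite rk_aa' ea'0 rk_a0.
  + by apply: rk_inj rk_aa'; apply: notin_add.
- rewrite inE => aA; rewrite (negbTE aA); have [-> | na0] := eqVneq a a0.
    by rewrite b0A.
  by case: (p a \in A); rewrite // ltnS rk_p // notin_add.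
- rewrite inE => aA b d; rewrite (negbTE aA).
  have [ea0 | na0] := eqVneq a a0.
    rewrite ea0 rk_a0; case: (boolP (b \in A)) => // bA _.
    by case: (boolP (d \in A)) => // dA _; apply: a0b0_min.
  have aA0 := notin_add a aA na0.
  case: (boolP (b \in A)) => // bA rk_ab.
  case: (boolP (d \in A)) => dA rk_da.
    by apply: rk_cut; rewrite // rk0 ?inE ?dA ?orbT // rk_gt0.
  by apply: rk_cut; rewrite // -ltnS.
Qed.

Lemma prim_order_exists (A : {set V}) :
  A != set0 -> exists rk p, prim_order A rk p.
Proof.
have [n] := ubnP #|~: A|; elim: n A => // n IH A card_lt /set0Pn[b1 b1A].
have [Afull | /set0Pn[a1 a1A]] := eqVneq (~: A) set0.
  by exists (fun=> 0%N), id; split=> a; rewrite ?Afull ?inE.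
pose crossing (e : V * V) := (e.1 \notin A) && (e.2 \in A).
have : crossing (a1, b1) by rewrite /crossing -in_setC a1A b1A.
case/(arg_minP (fun e => c e.1 e.2)) => -[a0 b0] /andP[/= a0A b0A] a0b0_min.
have [rk [p po]] : exists rk p, prim_order (a0 |: A) rk p.
  apply: IH; last by apply/set0Pn; exists b1; rewrite inE b1A orbT.
  rewrite -ltnS; apply: leq_trans card_lt; rewrite ltnS setCU setIC -setDE.
  by apply: proper_card; rewrite properD1 // inE.
exists (fun a => if a \in A then 0%N else (rk a).+1).
exists (fun a => if a == a0 then b0 else p a).
by apply: prim_order_add => // a b aA bA; apply: (a0b0_min (a, b)); rewrite /crossing aA.
Qed.
End PrimOrder.

Section ParentForest.
Variables (V : finType) (T : {set V}) (rk : V -> nat) (p : V -> V).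
Hypothesis rk_parent : {in ~: T, forall a, rk (p a) < rk a}%N.

Definition parent_edges : {set V * V} := [set (a, p a) | a in ~: T].

Lemma mem_parent_edges a b :
  ((a, b) \in parent_edges) = (a \in ~: T) && (b == p a).
Proof.
apply/imsetP/andP => [[a' a'T [-> ->]] | [aT /eqP->]]; last by exists a.
by rewrite a'T eqxx.
Qed.

Lemma parent_edge_down a b :
  uadj parent_edges a b -> (rk b <= rk a)%N -> b = p a.
Proof.
rewrite /uadj !mem_parent_edges => /orP[/andP[_ /eqP//] | /andP[bT /eqP ab]].
by rewrite ab leqNgt rk_parent.
Qed.

Lemma parent_edges_forest : is_forest parent_edges.
Proof.
split=> [a b | s size_s uniq_s].
  rewrite !mem_parent_edges => /andP[aT /eqP->].
  have rk_pa := rk_parent aT.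
  split; first by apply: contraTneq rk_pa => <-; rewrite ltnn.
  by apply/andP=> -[paT /eqP apa]; move: (rk_parent paT); rewrite -apa ltnNge ltnW.
(* Both cycle neighbours of a vertex of maximal rank would be its parent. *)
apply/negP => cycle_s.
have [w0 w0s] : exists w, w \in s.
  by case: s size_s {uniq_s cycle_s} => // w; exists w; exact: mem_head.
have [w ws w_max] := @arg_maxnP _ w0 (mem s) rk w0s.
have [i s' rot_s] := rot_to ws.
have : cycle (uadj parent_edges) (w :: s') by rewrite -rot_s rot_cycle.
have : uniq (w :: s') by rewrite -rot_s rot_uniq.
have : (2 < size (w :: s'))%N by rewrite -rot_s size_rot.
have below y : y \in w :: s' -> (rk y <= rk w)%N by rewrite -rot_s mem_rot; apply: w_max.
case: s' rot_s below => [|n [|m s']] // _ below _.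
rewrite cons_uniq => /andP[_]; rewrite cons_uniq => /andP[n_notin _].
rewrite /cycle rcons_path => /andP[/= /andP[w_n _] last_w].
have n_pw : n = p w by apply: parent_edge_down w_n (below _ _); rewrite !inE eqxx orbT.
have last_pw : last m s' = p w.
  apply: parent_edge_down; first by rewrite /uadj orbC.
  by apply: below; rewrite 2!in_cons mem_last !orbT.
by move: n_notin; rewrite n_pw -last_pw mem_last.
Qed.

Let climb a := if a \in T then a else p a.

Lemma iter_climb_id n t : t \in T -> iter n climb t = t.
Proof. by move=> tT; elim: n => //= n ->; rewrite /climb tT. Qed.

Lemma iter_climb_in n a : (rk a <= n)%N -> iter n climb a \in T.
Proof.
have rk_pa b : b \notin T -> (rk (p b) < rk b)%N by move=> bT; rewrite rk_parent ?inE.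
elim: n a => [|n IH] a rk_a; have [aT | aT] := boolP (a \in T).
- by [].
- by move: (rk_pa a aT); rewrite ltnNge (leq_trans rk_a).
- by rewrite iter_climb_id.
- by rewrite iterSr /climb (negbTE aT) IH // -ltnS (leq_trans (rk_pa a aT)).
Qed.

Lemma connect_iter_climb n a : connect (uadj parent_edges) a (iter n climb a).
Proof.
elim: n => // n IH; apply: connect_trans IH _; rewrite /= {2}/climb.
case: ifPn => bT; rewrite ?connect0 // connect1 //.
by rewrite /uadj mem_parent_edges inE bT eqxx.
Qed.

Lemma parent_edges_rooted : rooted_forest T parent_edges.
Proof.
split=> [|a]; first exact: parent_edges_forest.
pose top b := iter (\max_b rk b) climb b.
have top_in b : top b \in T by apply: iter_climb_in; exact: leq_bigmax.
have top_parent b : b \notin T -> top (p b) = top b.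
  move=> /negbTE bT; have -> : p b = climb b by rewrite /climb bT.
  by rewrite /top -iterSr iterS {1}/climb top_in.
have top_closed : closed (uadj parent_edges) [pred b | top b == top a].
  move=> b d; rewrite /uadj !mem_parent_edges !inE /=.
  by case/orP=> /andP[/top_parent<- /eqP->].
suff -> : [set t in T | connect (uadj parent_edges) a t] = [set top a] by rewrite cards1.
apply/setP=> t; rewrite !inE.
apply/andP/eqP => [[tT a_t] | ->]; last by split; [exact: top_in | exact: connect_iter_climb].
move: (closed_connect top_closed a_t); rewrite !inE eqxx => /esym/eqP <-.
by rewrite /top iter_climb_id.
Qed.
End ParentForest.

Section LayerCake.
Variable R : realDomainType.

Definition tail_mass (I : finType) (al u : I -> R) (t : R) : R :=
  \sum_i al i * ((t < u i)%R)%:R.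

Definition pos_support (I : finType) (u : I -> R) : {set I} := [set i | 0 < u i].

Section ShiftDown.
Variables (I : finType) (al u : I -> R) (m : R).
Hypotheses (u_ge0 : forall i, 0 <= u i) (m_ge0 : 0 <= m).

Definition shift_down i := Num.max (u i - m) 0.

Lemma shift_down_ge0 i : 0 <= shift_down i.
Proof. by rewrite le_max lexx orbT. Qed.

Lemma tail_mass_shift_down t :
  0 <= t -> tail_mass al shift_down t = tail_mass al u (t + m).
Proof.
move=> t_ge0; apply: eq_bigr => i _.
by rewrite /shift_down lt_max ltrBrDr ltNge t_ge0 orbF.
Qed.

Lemma pos_shift_down i : (0 < shift_down i) = (m < u i).
Proof. by rewrite /shift_down lt_max ltxx orbF subr_gt0. Qed.

Lemma card_pos_shift_down :
  (#|pos_support shift_down| <= #|pos_support u|)%N.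
Proof.
apply/subset_leq_card/subsetP=> i; rewrite !inE pos_shift_down.
exact: le_lt_trans.
Qed.

Lemma card_pos_shift_down_lt i0 :
  0 < m -> u i0 = m -> (#|pos_support shift_down| < #|pos_support u|)%N.
Proof.
move=> m_gt0 ui0; apply/proper_card; rewrite properE.
apply/andP; split.
  by apply/subsetP=> i; rewrite !inE pos_shift_down; exact: le_lt_trans (ltW m_gt0).
by apply/subsetPn; exists i0; rewrite !inE ?pos_shift_down ui0 ?ltxx.
Qed.

Hypothesis m_le : forall i, 0 < u i -> m <= u i.

Lemma sum_shift_down :
  \sum_i al i * u i = \sum_i al i * shift_down i + m * tail_mass al u 0.
Proof.
rewrite /tail_mass mulr_sumr -big_split; apply: eq_bigr => i _.
rewrite /= mulrCA -mulrDr /shift_down; congr (_ * _).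
have [ui_gt0 | ] := ltP 0 (u i).
  by rewrite mulr1 max_l ?subrK // subr_ge0 m_le.
rewrite mulr0 addr0 => ui_le0; have -> : u i = 0 by apply/eqP; rewrite eq_le ui_le0 u_ge0.
by rewrite max_r // sub0r oppr_le0.
Qed.
End ShiftDown.

(* Both sides are integrals over [t >= 0] of their tail masses; the induction peels off the
   layer below the least positive value [m]. *)
Lemma ler_sum_tail_mass (I J : finType) (al u : I -> R) (be w : J -> R) :
  (forall i, 0 <= al i) -> (forall j, 0 <= be j) ->
  (forall i, 0 <= u i) -> (forall j, 0 <= w j) ->
  (forall t, 0 <= t -> tail_mass al u t <= tail_mass be w t) ->
  \sum_i al i * u i <= \sum_j be j * w j.
Proof.
move=> al_ge0 be_ge0.
have [n] := ubnP (#|pos_support u| + #|pos_support w|)%N.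
elim: n u w => // n IH u w npos u_ge0 w_ge0 mass_le.
pose f (k : I + J) := match k with inl i => u i | inr j => w j end.
have [k0 k0_pos | no_pos] := pickP (fun k => 0 < f k); last first.
  have u0 i : u i = 0 by apply/eqP; rewrite eq_le u_ge0 leNgt (no_pos (inl i)).
  have w0 j : w j = 0 by apply/eqP; rewrite eq_le w_ge0 leNgt (no_pos (inr j)).
  by rewrite !big1 // => ? _; rewrite ?u0 ?w0 mulr0.
case: (@arg_minP _ _ _ k0 (fun k => 0 < f k) f k0_pos) => k k_pos k_min.
have attained : (exists i, u i = f k) \/ (exists j, w j = f k).
  by case: k {k_pos k_min} => [i | j]; [left; exists i | right; exists j].
set m := f k.
have m_gt0 : 0 < m by [].
have m_u i : 0 < u i -> m <= u i by exact: (k_min (inl i)).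
have m_w j : 0 < w j -> m <= w j by exact: (k_min (inr j)).
rewrite (sum_shift_down al u_ge0 (ltW m_gt0) m_u) (sum_shift_down be w_ge0 (ltW m_gt0) m_w).
apply: lerD; last (apply: ler_wpM2l; [exact: ltW | exact: mass_le]).
apply: IH; [|exact: shift_down_ge0 ..|].
- rewrite -ltnS; apply: leq_trans npos; rewrite ltnS.
  case: attained => [[i ui] | [j wj]].
    by rewrite -addSn leq_add ?(card_pos_shift_down_lt m_gt0 ui) ?card_pos_shift_down ?ltW.
  by rewrite -addnS leq_add ?(card_pos_shift_down_lt m_gt0 wj) ?card_pos_shift_down ?ltW.
- move=> t t_ge0; rewrite !tail_mass_shift_down //.
  by apply: mass_le; rewrite addr_ge0 // ltW.
Qed.
End LayerCake.

Lemma metric_ge0 (R : realType) (V : finType) (c : V -> V -> R) :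
  is_metric c -> forall a b, 0 <= c a b.
Proof.
by case=> c0 c_pos _ _ a b; have [->|/c_pos/ltW] := eqVneq a b; rewrite ?c0.
Qed.

Definition enters (V : finType) (S : {set V}) (e : V * V) : bool :=
  (e.1 \notin S) && (e.2 \in S).

Section PrimCostBound.
Variables (R : realType) (V : finType) (Dep : {set V}) (c : V -> V -> R).
Variables (x : V -> V -> V -> V -> R) (z : V -> V -> V -> R).
Variables (rk : V -> nat) (p : V -> V).
Hypotheses (c_metric : is_metric c) (prim : prim_order c Dep rk p).
Hypothesis x_ge0 : forall r v a b, 0 <= x r v a b.
Hypothesis x_cut : forall r v (S : {set V}) u,
  r \in Dep -> v \in ~: Dep -> u \in S -> r \notin S ->
  z r v u <= \sum_(e | enters S e) x r v e.1 e.2.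
Hypothesis z_assign : forall u, u \in ~: Dep ->
  \sum_(r in Dep) \sum_(v in ~: Dep) z r v u = 1.

Definition edge_load (e : V * V) : R :=
  \sum_(r in Dep) \sum_(v in ~: Dep) x r v e.1 e.2.

Lemma edge_load_ge0 e : 0 <= edge_load e.
Proof. by apply: sumr_ge0 => r _; apply: sumr_ge0. Qed.

Lemma lp_cost_edge_load : lp_cost Dep c x = \sum_e edge_load e * c e.1 e.2.
Proof.
have [c0 _ _ _] := c_metric.
have drop_loops r v : \sum_(e : V * V | e.1 != e.2) c e.1 e.2 * x r v e.1 e.2
                    = \sum_e c e.1 e.2 * x r v e.1 e.2.
  rewrite big_mkcond; apply: eq_bigr => -[a b] _ /=.
  by case: eqVneq => // ->; rewrite c0 mul0r.
rewrite /lp_cost; under eq_bigr => r _ do under eq_bigr => v _ do rewrite drop_loops.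
under eq_bigr => r _ do rewrite exchange_big; rewrite exchange_big.
apply: eq_bigr => e _; rewrite /edge_load mulr_suml; apply: eq_bigr => r _.
by rewrite mulr_suml; apply: eq_bigr => v _; rewrite mulrC.
Qed.

Lemma edge_load_enters_ge1 (S : {set V}) a :
  a \in S -> S \subset ~: Dep -> 1 <= \sum_(e | enters S e) edge_load e.
Proof.
move=> aS SDep; have aC := subsetP SDep a aS.
rewrite -(z_assign aC) /edge_load [X in _ <= X]exchange_big.
apply: ler_sum => r rDep; rewrite [X in _ <= X]exchange_big; apply: ler_sum => v vC.
by apply: x_cut => //; apply: contraTN rDep => /(subsetP SDep); rewrite inE.
Qed.

Section Threshold.
Variable t : R.

Let cheap := [rel a b | c a b <= t].
Let comp a := [set b | connect cheap a b].
Let expensive a := (a \in ~: Dep) && (t < c a (p a)).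

Lemma cheap_connect_sym : connect_sym cheap.
Proof. by apply: sym_connect_sym => a b; case: c_metric => _ _ c_sym _; rewrite /= c_sym. Qed.

Lemma comp_rank_ge a b : expensive a -> b \in comp a -> (rk a <= rk b)%N.
Proof.
case/andP=> aC ta; rewrite inE => a_b; have [_ _ _ cut] := prim.
have above_closed : closed cheap [pred y | rk a <= rk y]%N.
  apply: (intro_closed cheap_connect_sym) => y d /= y_d; rewrite !inE => ay; rewrite leqNgt.
  by apply: contraTN ta => da; rewrite -leNgt (le_trans (cut a aC y d ay da)).
by have := closed_connect above_closed a_b; rewrite !inE leqnn => <-.
Qed.

Lemma comp_enters_gt a e : enters (comp a) e -> t < c e.1 e.2.
Proof.
case: e => b d; rewrite /enters !inE /= => /andP[a_b a_d]; rewrite ltNge.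
apply: contra a_b => bd; apply: connect_trans a_d _.
by rewrite cheap_connect_sym connect1.
Qed.

Lemma comp_inj a a' b :
  expensive a -> expensive a' -> b \in comp a -> b \in comp a' -> a = a'.
Proof.
move=> ea ea' a_b a'_b; have [_ rk_inj _ _] := prim.
move: a_b a'_b; rewrite !inE => a_b a'_b.
have a_a' : a' \in comp a by rewrite inE (connect_trans a_b) // cheap_connect_sym.
have a'_a : a \in comp a' by rewrite inE (connect_trans a'_b) // cheap_connect_sym.
apply: rk_inj; [by case/andP: ea | by case/andP: ea' |].
by apply/eqP; rewrite eqn_leq !comp_rank_ge.
Qed.

Lemma comp_sub_clients a : expensive a -> comp a \subset ~: Dep.
Proof.
move=> ea; have [rk0 _ _ _] := prim; apply/subsetP => r a_r; rewrite inE.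
apply/negP => rDep; have /andP[aC _] := ea; have := prim_order_rank_gt0 prim aC.
by rewrite ltnNge (leq_trans (comp_rank_ge ea a_r)) // rk0.
Qed.

Lemma count_entered_comps e :
  \sum_(a | expensive a) (enters (comp a) e)%:R <= ((t < c e.1 e.2)%R)%:R :> R.
Proof.
have [a0 /andP[ea0 ent0] | none] := pickP (fun a => expensive a && enters (comp a) e).
  rewrite (bigD1 a0) //= ent0 (comp_enters_gt ent0) big1 ?addr0 // => a /andP[ea na0].
  suff /negbTE-> : ~~ enters (comp a) e by [].
  apply: contra na0 => ent; apply/eqP.
  exact: comp_inj ea ea0 (andP ent).2 (andP ent0).2.
by rewrite big1 ?ler0n // => a ea; move: (none a); rewrite ea /= => ->.
Qed.

Lemma tail_mass_prim_le :
  tail_mass (fun a => (a \in ~: Dep)%:R) (fun a => c a (p a)) t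
  <= tail_mass edge_load (fun e => c e.1 e.2) t.
Proof.
apply: (@le_trans _ _ (\sum_(a | expensive a) \sum_(e | enters (comp a) e) edge_load e)).
  rewrite /tail_mass [X in _ <= X]big_mkcond /=; apply: ler_sum => a _.
  rewrite -natrM mulnb -/(expensive a); case: ifP => [ea | _]; last by [].
  by apply: (edge_load_enters_ge1 (a := a)) (comp_sub_clients ea); rewrite inE.
rewrite (eq_bigr (fun a => \sum_e (enters (comp a) e)%:R * edge_load e)); last first.
  by move=> a _; rewrite big_mkcond; apply: eq_bigr => e _; case: ifP; rewrite ?mul1r ?mul0r.
rewrite exchange_big /tail_mass; apply: ler_sum => e _.
by rewrite -big_distrl /= mulrC ler_wpM2l ?edge_load_ge0 ?count_entered_comps.
Qed.
End Threshold.

Lemma prim_cost_le_lp_cost : \sum_(a in ~: Dep) c a (p a) <= lp_cost Dep c x.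
Proof.
apply: (@le_trans _ _ (\sum_a (a \in ~: Dep)%:R * c a (p a))).
  by rewrite big_mkcond; apply: ler_sum => a _; case: ifP; rewrite ?mul1r ?mul0r.
rewrite lp_cost_edge_load; apply: ler_sum_tail_mass => [a | e | a | e | t _].
- exact: ler0n.
- exact: edge_load_ge0.
- exact: metric_ge0 c_metric _ _.
- exact: metric_ge0 c_metric _ _.
- exact: tail_mass_prim_le.
Qed.
End PrimCostBound.

Section Sampling.
Variables (R : realType) (I : finType) (mu : I -> R).

Lemma sum_sample_prob_avoid (Q : pred I) :
  \sum_S sample_prob mu S * [forall i in S, ~~ Q i]%:R = \prod_(i | Q i) (1 - mu i).
Proof.
have -> : \prod_(i | Q i) (1 - mu i) = \prod_i (mu i * (~~ Q i)%:R + (1 - mu i)).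
  rewrite big_mkcond /=; apply: eq_bigr => i _.
  by case: (Q i); rewrite ?mulr0 ?add0r // mulr1 addrC subrK.
rewrite (bigA_distr _ _ (fun i => mu i * (~~ Q i)%:R) (fun i => 1 - mu i)) /=.
apply: eq_bigr => S _; rewrite /sample_prob [RHS](bigID (mem S)) /=.
rewrite [X in _ = X * _](eq_bigr (fun i => mu i * (~~ Q i)%:R)); last by move=> i ->.
rewrite [X in _ = _ * X](eq_bigr (fun i => 1 - mu i)); last by move=> i /negbTE->.
rewrite big_split /= mulrAC; congr (_ * _ * _); last by apply: eq_bigl => i; rewrite inE.
have [/forallP avoid | /forallPn[i]] := boolP [forall i in S, ~~ Q i].
  by rewrite big1 // => i iS; move: (avoid i); rewrite iS /= => ->.
by rewrite negb_imply negbK => /andP[iS Qi]; rewrite (bigD1 i) //= Qi mul0r.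
Qed.

Hypothesis mu01 : forall i, 0 <= mu i <= 1.

Lemma sample_prob_ge0 S : 0 <= sample_prob mu S.
Proof.
by apply: mulr_ge0; apply: prodr_ge0 => i _; have /andP[mu0 mu1] := mu01 i; rewrite ?subr_ge0.
Qed.

Lemma sum_sample_prob_avoid_le (Q : pred I) :
  \sum_S sample_prob mu S * [forall i in S, ~~ Q i]%:R <= expR (- \sum_(i | Q i) mu i).
Proof.
rewrite sum_sample_prob_avoid -sumrN expR_sum; apply: ler_prod => i _.
have /andP[_ mu1] := mu01 i; rewrite subr_ge0 mu1 /=.
exact: expR_ge1Dx.
Qed.
End Sampling.

Section Decomposition.
Variables (R : realType) (V : finType) (Dep : {set V}) (gamma : R).
Variables (x : V -> V -> V -> V -> R) (z : V -> V -> V -> R).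
Variables (I : finType) (root cli : I -> V) (B : I -> {set V * V}) (mu : I -> R).
Hypotheses (gamma_ge0 : 0 <= gamma) (gamma_le : gamma <= 1 / 2).
Hypothesis z_ge0 : forall r v u, 0 <= z r v u.
Hypothesis z_assign : forall u, u \in ~: Dep ->
  \sum_(r in Dep) \sum_(v in ~: Dep) z r v u = 1.
Hypothesis dec : decomposition_ok Dep gamma x z root cli B mu.

Let covers a i := a \in dverts (root i) (B i).

Lemma decomposition_mu_ge0 i : 0 <= mu i.
Proof. by have [/(_ i)[]] := dec. Qed.

Lemma decomposition_mu01 i : 0 <= mu i <= 1.
Proof.
rewrite decomposition_mu_ge0 /=.
have [/(_ i)[rDep vC _ _ _] mu_sum _ _] := dec.
apply: (@le_trans _ _ (\sum_(j | (root j == root i) && (cli j == cli i)) mu j)).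
  by rewrite (bigD1 i) ?eqxx //= lerDl sumr_ge0 // => j _; exact: decomposition_mu_ge0.
have z_le1 : z (root i) (cli i) (cli i) <= 1.
  rewrite -(z_assign vC) (bigD1 (root i)) //= (bigD1 (cli i)) //= -addrA lerDl.
  by rewrite addr_ge0 ?sumr_ge0 // => r _; rewrite sumr_ge0.
rewrite mu_sum //; apply: le_trans (_ : 2 * gamma * 1 <= 1).
  by rewrite ler_wpM2l ?mulr_ge0.
by rewrite mulr1; move: gamma_le; lra.
Qed.

Lemma decomposition_covers a :
  a \in ~: Dep -> gamma <= \sum_(i | covers a i) mu i.
Proof.
move=> aC; have [dec_i mu_sum _ mu_cover] := dec.
rewrite -[gamma]mulr1 -(z_assign aC) mulr_sumr.
rewrite (partition_big root (mem Dep)) /=; last by move=> i _; case: (dec_i i).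
apply: ler_sum => r rDep; rewrite mulr_sumr.
rewrite (partition_big cli (mem (~: Dep))) /=; last by move=> i _; case: (dec_i i).
apply: ler_sum => v vC; have [-> | va] := eqVneq v a.
  rewrite (eq_bigl (fun i => (root i == r) && (cli i == a))) => [|i].
    by rewrite mu_sum // -mulrA mulr_natl mulr2n lerDl mulr_ge0.
  have [<- | _] := eqVneq (cli i) a; last by rewrite !andbF.
  by case: (dec_i i) => _ _ _ _ covi; rewrite [covers _ _]covi.
apply: le_trans (mu_cover r v a rDep vC aC _) _; first by rewrite eq_sym.
rewrite (eq_bigl (fun i => [&& root i == r, cli i == v & covers a i])) // => i.
by case: (covers a i); rewrite ?andbT ?andbF.
Qed.

Lemma uncovered_prob_le a : a \in ~: Dep ->
  \sum_S sample_prob mu S * (a \in uncovered Dep root B S)%:R <= expR (- gamma).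
Proof.
move=> aC; under eq_bigr => S _ do rewrite inE aC /=.
apply: le_trans (sum_sample_prob_avoid_le decomposition_mu01 (covers a)) _.
by rewrite ler_expR lerN2 decomposition_covers.
Qed.

Lemma expected_uncovered_cost_le (w : V -> R) : (forall a, 0 <= w a) ->
  \sum_S sample_prob mu S * \sum_(a in uncovered Dep root B S) w a
    <= expR (- gamma) * \sum_(a in ~: Dep) w a.
Proof.
move=> w_ge0.
have -> : \sum_S sample_prob mu S * \sum_(a in uncovered Dep root B S) w a
        = \sum_a w a * \sum_S sample_prob mu S * (a \in uncovered Dep root B S)%:R.
  under eq_bigr => S _ do rewrite big_mkcond mulr_sumr /=.
  rewrite exchange_big; apply: eq_bigr => a _; rewrite mulr_sumr; apply: eq_bigr => S _.
  by case: ifP; rewrite ?mulr1 ?mulr0 // mulrC.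
rewrite mulr_sumr [X in _ <= X]big_mkcond; apply: ler_sum => a _ /=.
case: ifPn => aC; first by rewrite [X in _ <= X]mulrC ler_wpM2l ?uncovered_prob_le.
by rewrite big1 ?mulr0 // => S _; rewrite inE (negbTE aC) mulr0.
Qed.
End Decomposition.

Lemma forest_cost_parent_edges (R : realType) (V : finType) (c : V -> V -> R)
    (T : {set V}) (p : V -> V) :
  forest_cost c (parent_edges T p) = \sum_(a in ~: T) c a (p a).
Proof. by rewrite /forest_cost big_imset // => a b _ _ []. Qed.

Lemma setC_setU_setD (V : finType) (A U : {set V}) :
  U \subset ~: A -> ~: (A :|: (~: A :\: U)) = U.
Proof.
move/subsetP=> UA; apply/setP=> a; rewrite !inE.
by have [/UA | _] := boolP (a \in U); [rewrite inE => /negbTE-> | case: (a \in A)].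
Qed.

Lemma min_rooted_forest_cost_le (R : realType) (V : finType) (c : V -> V -> R)
    (A T : {set V}) (rk : V -> nat) (p : V -> V) (F : {set V * V}) :
  prim_order c A rk p -> A \subset T ->
  (forall F', rooted_forest T F' -> forest_cost c F <= forest_cost c F') ->
  forest_cost c F <= \sum_(a in ~: T) c a (p a).
Proof.
move=> [_ _ rk_p _] AT F_min; rewrite -forest_cost_parent_edges.
apply/F_min/(parent_edges_rooted (rk := rk)) => a aT; apply: rk_p.
by apply: subsetP aT; rewrite setCS.
Qed.

Unset Implicit Arguments.

Theorem lemma5 (R : realType) (V : finType) (Dep : {set V})
    (c : V -> V -> R) (k : nat) (gamma : R)
    (x : V -> V -> V -> V -> R) (z : V -> V -> V -> R)
    (I : finType) (root cli : I -> V) (B : I -> {set V * V}) (mu : I -> R)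
    (Fs : {set I} -> {set V * V}) :
  Dep != set0 -> ~: Dep != set0 ->
  is_metric c ->
  (forall v r, v \in ~: Dep -> r \in Dep -> 0 < c v r) ->
  (3 <= k)%N ->
  0 < gamma <= 1 / 2 ->
  lp_optimal Dep c k x z ->
  lp_extreme Dep c k x z ->
  decomposition_ok Dep gamma x z root cli B mu ->
  (forall S : {set I},
     rooted_forest (Dep :|: (~: Dep :\: uncovered Dep root B S)) (Fs S) /\
     forall F', rooted_forest (Dep :|: (~: Dep :\: uncovered Dep root B S)) F' ->
       forest_cost c (Fs S) <= forest_cost c F') ->
  \sum_(S : {set I}) sample_prob mu S * forest_cost c (Fs S)
    <= expR (- gamma) * lp_cost Dep c x.
Proof.
move=> Dep_n0 _ c_metric _ _ /andP[/ltW gamma_ge0 gamma_le] [feas _] _ dec Fs_min.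
have [_ [_ [x_ge0 [z_ge0 [_ [_ [x_cut [z_assign _]]]]]]]] := feas.
have [rk [p prim]] := prim_order_exists c Dep_n0.
have mu01 := decomposition_mu01 gamma_ge0 gamma_le z_ge0 z_assign dec.
pose U S := uncovered Dep root B S.
have Fs_le S : forest_cost c (Fs S) <= \sum_(a in U S) c a (p a).
  have U_sub : U S \subset ~: Dep by apply/subsetP=> a; rewrite inE => /andP[].
  rewrite -[in X in _ <= X](setC_setU_setD U_sub).
  by apply: min_rooted_forest_cost_le prim (subsetUl _ _) (Fs_min S).2.
apply: (@le_trans _ _ (\sum_S sample_prob mu S * \sum_(a in U S) c a (p a))).
  by apply: ler_sum => S _; rewrite ler_wpM2l ?Fs_le ?sample_prob_ge0.
apply: le_trans (expected_uncovered_cost_le gamma_ge0 gamma_le z_ge0 z_assign dec _) _.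
  by move=> a; apply: metric_ge0.
by rewrite ler_wpM2l ?expR_ge0 ?(prim_cost_le_lp_cost c_metric prim x_ge0 x_cut z_assign).
Qed.
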